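(* Let $n\ge 2$, $F\in GL^+(n)$, $\mu>0$, $\mu_c\ge 0$, and consider $\widetilde W_{\mu,\mu_c}(\cdot;F):SO(n)\to\mathbb R$. Then: (i) A rotation $R\in SO(n)$ is a critical point of $\widetilde W_{\mu,\mu_c}(\cdot;F)$ if and only if $$(\mu-\mu_c)\big(FR^TFR^T-RF^TRF^T\big)=2\mu\,(FR^T-RF^T).$$ (ii) Let $X\in\mathcal M_{n\times n}(\mathbb R)$ with $\det X>0$ and put $R=X^TF^{-T}$. Then $R\in SO(n)$ and $R$ is a critical point of $\widetilde W_{\mu,\mu_c}(\cdot;F)$ if and only if $$(\mu-\mu_c)\big(X^2-(X^T)^2\big)=2\mu(X-X^T)\quad\text{and}\quad XX^T=FF^T .$$ (iii) Equivalently, with $X$ and $R$ as in (ii), $R\in SO(n)$ is a critical point if and only if $$(X-X^T)\big((\mu-\mu_c)(X+X^T)-2\mu\,\mathbb I_n\big)=(\mu-\mu_c)[X,X^T]\quad\text{and}\quad XX^T=FF^T,$$ where $[U,V]=UV-VU$. (Every $R\in SO(n)$ arises in this way, with $X=FR^T$.)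
   Context: For a square matrix $Y$, $\mathrm{sym}(Y)=\tfrac12(Y+Y^T)$, $\mathrm{skew}(Y)=\tfrac12(Y-Y^T)$, and $\|Y\|^2=\mathrm{tr}(Y^TY)$ is the Frobenius norm. $GL^+(n)$ denotes real $n\times n$ matrices with positive determinant. For $F\in GL^+(n)$, $\mu>0$, $\mu_c\ge0$, the generalized free energy is $\widetilde W_{\mu,\mu_c}(R;F)=\mu\|\mathrm{sym}(R^TF-\mathbb I_n)\|^2+\mu_c\|\mathrm{skew}(R^TF-\mathbb I_n)\|^2$ for $R\in SO(n)$. A critical point means a critical point of this function restricted to the smooth submanifold $SO(n)\subset\mathcal M_{n\times n}(\mathbb R)$. *)

From HB Require Import structures.
From mathcomp Require Import all_boot all_order all_algebra.
Set Implicit Arguments. Unset Strict Implicit. Unset Printing Implicit Defensive.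
Import Order.TTheory GRing.Theory Num.Theory.
Local Open Scope ring_scope.

Section Defs.
Variables (K : realFieldType) (n : nat).
Notation M := 'M[K]_n.

Definition msym (Y : M) : M := 2^-1 *: (Y + Y^T).
Definition mskew (Y : M) : M := 2^-1 *: (Y - Y^T).
Definition frob2 (Y : M) : K := \tr (Y^T *m Y).

Definition GLplus (F : M) : Prop := 0 < \det F.
Definition SOn (R : M) : Prop := R^T *m R = 1%:M /\ \det R = 1.

Definition Wt (mu muc : K) (F R : M) : K :=
  mu * frob2 (msym (R^T *m F - 1%:M)) + muc * frob2 (mskew (R^T *m F - 1%:M)).

Definition has_deriv0 (f : K -> K) (l : K) : Prop :=
  forall eps : K, 0 < eps -> exists2 delta : K, 0 < delta &
    forall t : K, 0 < `|t| < delta -> `|(f t - f 0) / t - l| < eps.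

(* tangent space of SO(n) at R, as a regular level set of X |-> X^T X *)
Definition tangentSO (R H : M) : Prop := H^T *m R + R^T *m H = 0.

Definition critical_SO (f : M -> K) (R : M) : Prop :=
  SOn R /\ forall H : M, tangentSO R H -> has_deriv0 (fun t => f (R + t *: H)) 0.

Definition commutator (U V : M) : M := U *m V - V *m U.
End Defs.

From HB Require Import structures.
From mathcomp Require Import all_boot all_order all_algebra.
From mathcomp Require Import ring lra.
Set Implicit Arguments. Unset Strict Implicit. Unset Printing Implicit Defensive.
Import Order.TTheory GRing.Theory Num.Theory.
Local Open Scope ring_scope.

(* Along a line R + t H the energy is a quadratic polynomial in t, so its
   derivative at t = 0 is the linear coefficient, the first variation
   (Wt_line, deriv0_quadratic).  The tangent space of SO(n) at R consists of
   the H = B R with B skew (tangentSO_skew), and in such a direction the first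
   variation is -tr(N B) for an explicit matrix N = stress (F R^T)
   (first_variation_skew).  Since the symmetric matrices are exactly the
   trace-orthogonal complement of the skew ones (skew_orthogonal_sym), R is
   critical iff N is symmetric, which is the equation of part (i) written in
   X = F R^T (stress_sym_iff, critical_SO_iff).  Part (ii) is the change of
   variables R = X^T F^-T, under which R in SO(n) becomes X X^T = F F^T
   (SOn_subst), and part (iii) is an algebraic rewriting of the equation
   (critical_point_eq_commutator). *)

Lemma deriv0_quadratic (K : realFieldType) (f : K -> K) (b c : K) :
  (forall t, f t - f 0 = t * (b + t * c)) -> (has_deriv0 f 0 <-> b = 0).
Proof.
move=> hf.
have quot t : t != 0 -> (f t - f 0) / t - 0 = b + t * c.
  by move=> t0; rewrite hf subr0 mulrC mulKf.
split=> [hd | b0 eps eps_gt0].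
- apply/eqP/negP => /negP b_neq0; have b_gt0 : 0 < `|b| by rewrite normr_gt0.
  have [d d_gt0 near0] := hd (`|b| / 2) ltac:(lra).
  have at_pos : `|b + d / 2 * c| < `|b| / 2.
    rewrite -quot; last by apply/eqP; lra.
    by apply: near0; rewrite ger0_norm; lra.
  have at_neg : `|b + - (d / 2) * c| < `|b| / 2.
    rewrite -quot; last by apply/eqP; lra.
    by apply: near0; rewrite normrN ger0_norm; lra.
  have := ler_normD (b + d / 2 * c) (b + - (d / 2) * c).
  have -> : b + d / 2 * c + (b + - (d / 2) * c) = 2 * b by ring.
  rewrite normrM ger0_norm; lra.
- have c_ge0 := normr_ge0 c.
  exists (eps / (`|c| + 1)) => [|t /andP [t_gt0 t_lt]]; first by rewrite divr_gt0 //; lra.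
  rewrite quot -?normr_gt0 // b0 add0r normrM.
  rewrite ltr_pdivlMr in t_lt; last by lra.
  have := normr_ge0 t; nra.
Qed.

Section FreeEnergyVariation.
Variables (K : realFieldType) (n : nat).
Local Notation M := 'M[K]_n.

Lemma trmxD (A B : M) : (A + B)^T = A^T + B^T. Proof. exact: raddfD. Qed.
Lemma trmxB (A B : M) : (A - B)^T = A^T - B^T. Proof. exact: raddfB. Qed.
Lemma trmxZ (a : K) (A : M) : (a *: A)^T = a *: A^T. Proof. exact: linearZ. Qed.

Lemma mxtrace_rot (A B C : M) : \tr (A *m B *m C) = \tr (C *m A *m B).
Proof. by rewrite mxtrace_mulC mulmxA. Qed.

Lemma mxtrace_trmx_mul (A B : M) : \tr (A^T *m B) = \tr (B^T *m A).
Proof. by rewrite -mxtrace_tr trmx_mul trmxK. Qed.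

Lemma frob2_line (P Q : M) (t : K) :
  frob2 (P + t *: Q) = frob2 P + t * (2 * \tr (P^T *m Q)) + t * (t * frob2 Q).
Proof.
rewrite /frob2 trmxD trmxZ mulmxDl !mulmxDr -!scalemxAl -!scalemxAr.
by rewrite !mxtraceD !mxtraceZ [\tr (Q^T *m P)]mxtrace_trmx_mul; ring.
Qed.

Lemma msym_line (P Q : M) (t : K) : msym (P + t *: Q) = msym P + t *: msym Q.
Proof.
rewrite /msym trmxD trmxZ scalerA mulrC -scalerA -scalerDr.
by congr (_ *: _); rewrite scalerDr addrACA.
Qed.

Lemma mskew_line (P Q : M) (t : K) : mskew (P + t *: Q) = mskew P + t *: mskew Q.
Proof.
rewrite /mskew trmxD trmxZ scalerA mulrC -scalerA -scalerDr.
by congr (_ *: _); rewrite scalerBr opprD addrACA.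
Qed.

Lemma mxtrace_msym (P Q : M) :
  2 * \tr ((msym P)^T *m msym Q) = \tr (P^T *m Q) + \tr (P *m Q).
Proof.
rewrite /msym trmxZ trmxD trmxK -scalemxAl -scalemxAr !mxtraceZ.
rewrite mulmxDl !mulmxDr !mxtraceD -trmx_mul mxtrace_tr.
rewrite [\tr (Q *m P)]mxtrace_mulC [\tr (P *m Q^T)]mxtrace_mulC.
by rewrite [\tr (Q^T *m P)]mxtrace_trmx_mul; field.
Qed.

Lemma mxtrace_mskew (P Q : M) :
  2 * \tr ((mskew P)^T *m mskew Q) = \tr (P^T *m Q) - \tr (P *m Q).
Proof.
rewrite /mskew trmxZ trmxB trmxK -scalemxAl -scalemxAr !mxtraceZ.
rewrite mulmxBl !mulmxBr !raddfB /= -trmx_mul mxtrace_tr.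
rewrite [\tr (Q *m P)]mxtrace_mulC [\tr (P *m Q^T)]mxtrace_mulC.
by rewrite [\tr (Q^T *m P)]mxtrace_trmx_mul; field.
Qed.

Lemma tangentSO_skew (R H : M) : R^T *m R = 1%:M ->
  tangentSO R H <-> (H *m R^T)^T = - (H *m R^T).
Proof.
move=> RtR; have RRt := mulmx1C RtR.
have conj : R *m (H^T *m R + R^T *m H) *m R^T = (H *m R^T)^T + H *m R^T.
  rewrite trmx_mul trmxK mulmxDr mulmxDl !mulmxA RRt mul1mx.
  by rewrite -!mulmxA RRt mulmx1.
have unconj : R^T *m ((H *m R^T)^T + H *m R^T) *m R = H^T *m R + R^T *m H.
  rewrite trmx_mul trmxK mulmxDr mulmxDl !mulmxA RtR mul1mx.
  by rewrite -!mulmxA RtR mulmx1.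
rewrite /tangentSO; split=> [tan | skew].
- by apply/eqP; rewrite -addr_eq0 -conj tan mulmx0 mul0mx.
- move/eqP: skew; rewrite -addr_eq0 => /eqP skew.
  by rewrite -unconj skew mulmx0 mul0mx.
Qed.

Lemma mxtrace_mul_delta (N : M) (a b : 'I_n) : \tr (N *m delta_mx a b) = N b a.
Proof.
rewrite /mxtrace (bigD1 b) //= big1 ?addr0 => [|k kb]; last first.
  by rewrite mxE big1 // => l _; rewrite mxE (negbTE kb) andbF mulr0.
rewrite mxE (bigD1 a) //= big1 ?addr0 => [|l la]; last by rewrite mxE (negbTE la) mulr0.
by rewrite mxE !eqxx mulr1.
Qed.

Lemma skew_orthogonal_sym (N : M) :
  (forall B : M, B^T = - B -> \tr (N *m B) = 0) <-> N^T = N.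
Proof.
split=> [orth | Nsym B Bskew].
- apply/matrixP => i j; rewrite mxE; apply/eqP; rewrite -subr_eq0.
  have := orth (delta_mx i j - delta_mx j i).
  by rewrite trmxB !trmx_delta opprB mulmxBr raddfB /= !mxtrace_mul_delta => ->.
- have e : \tr (N *m B) = - \tr (N *m B).
    by rewrite -{1}mxtrace_tr trmx_mul Bskew Nsym mulNmx raddfN mxtrace_mulC.
  lra.
Qed.

Lemma orthogonal_det_pos (R : M) : R^T *m R = 1%:M -> 0 < \det R -> \det R = 1.
Proof.
move=> RtR det_gt0.
have : \det R * \det R = 1 by rewrite -{1}det_tr -det_mulmx RtR det1.
nra.
Qed.

Definition critical_point_eq (mu muc : K) (X : M) : Prop :=
  (mu - muc) *: (X *m X - X^T *m X^T) = (2 * mu) *: (X - X^T).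

Section Energy.
Variables (mu muc : K) (F : M).

(* The coefficient of t in Wt (R + t H), i.e. the directional derivative of
   the energy at R in the direction H, with Y = R^T F - 1 and D = H^T F. *)
Definition first_variation (R H : M) : K :=
  let Y := R^T *m F - 1%:M in let D := H^T *m F in
  mu * (\tr (Y^T *m D) + \tr (Y *m D)) + muc * (\tr (Y^T *m D) - \tr (Y *m D)).

Lemma Wt_line (R H : M) (t : K) :
  Wt mu muc F (R + t *: H) = Wt mu muc F R + t * (first_variation R H +
     t * (mu * frob2 (msym (H^T *m F)) + muc * frob2 (mskew (H^T *m F)))).
Proof.
rewrite /Wt.
have -> : (R + t *: H)^T *m F - 1%:M = (R^T *m F - 1%:M) + t *: (H^T *m F).
  by rewrite trmxD trmxZ mulmxDl -scalemxAl addrAC.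
rewrite msym_line mskew_line !frob2_line mxtrace_msym mxtrace_mskew.
rewrite /first_variation; set Y := R^T *m F - 1%:M; set D := H^T *m F.
move: (frob2 (msym Y)) (frob2 (mskew Y)) (frob2 (msym D)) (frob2 (mskew D)).
by move: (\tr (Y^T *m D)) (\tr (Y *m D)) => ? ? ? ? ? ?; ring.
Qed.

Lemma deriv0_Wt_line (R H : M) :
  has_deriv0 (fun t => Wt mu muc F (R + t *: H)) 0 <-> first_variation R H = 0.
Proof.
apply: deriv0_quadratic => t.
by rewrite (Wt_line R H t) (Wt_line R H 0) mul0r addr0 addrAC subrr add0r.
Qed.

(* The symmetric part of this matrix is the gradient of the energy,
   written in terms of X = F R^T. *)
Definition stress (X : M) : M :=
  (mu + muc) *: (F *m F^T - X) + (mu - muc) *: (X *m X - X).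

Lemma first_variation_skew (R B : M) : R *m R^T = 1%:M -> B^T = - B ->
  first_variation R (B *m R) = - \tr (stress (F *m R^T) *m B).
Proof.
move=> RRt Bskew.
have D_eq : (B *m R)^T *m F = - (R^T *m B *m F).
  by rewrite trmx_mul Bskew mulmxN mulNmx.
have YtD : \tr ((R^T *m F - 1%:M)^T *m ((B *m R)^T *m F))
           = \tr (F *m R^T *m B) - \tr (F *m F^T *m B).
  rewrite D_eq trmxB trmx_mul trmxK trmx1 mulmxN mulmxBl mul1mx !mulmxA.
  rewrite -(mulmxA F^T R) RRt mulmx1 raddfN raddfB /=.
  by rewrite (mxtrace_rot F^T) (mxtrace_rot R^T) opprB.
have YD : \tr ((R^T *m F - 1%:M) *m ((B *m R)^T *m F))
          = \tr (F *m R^T *m B) - \tr (F *m R^T *m (F *m R^T) *m B).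
  rewrite D_eq mulmxN mulmxBl mul1mx !mulmxA raddfN raddfB /=.
  by rewrite (mxtrace_rot _ B) (mxtrace_rot R^T) opprB !mulmxA.
rewrite /first_variation YtD YD /stress mulmxDl -!scalemxAl !mulmxBl !mulmxA.
rewrite mxtraceD !mxtraceZ !raddfB /=.
move: (\tr (F *m R^T *m B)) (\tr (F *m F^T *m B)) => ? ?.
by move: (\tr (F *m R^T *m F *m R^T *m B)) => ?; ring.
Qed.

(* N = stress X is symmetric iff X solves the critical-point equation:
   N - N^T is exactly the difference of the two sides. *)
Lemma stress_sym_iff (X : M) :
  (stress X)^T = stress X <-> critical_point_eq mu muc X.
Proof.
have asym : stress X - (stress X)^T =
  (mu - muc) *: (X *m X - X^T *m X^T) - (2 * mu) *: (X - X^T).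
  rewrite /stress trmxD !trmxZ !trmxB !trmx_mul !trmxK.
  set S := F *m F^T; set P := X *m X; set Pt := X^T *m X^T; set Xt := X^T.
  clearbody S P Pt Xt.
  by apply/matrixP => i j; rewrite !mxE; ring.
rewrite /critical_point_eq; split=> [sym | eq].
- by apply/eqP; rewrite -subr_eq0 -asym sym subrr.
- by apply/eqP; rewrite eq_sym -subr_eq0 asym eq subrr.
Qed.

Lemma critical_SO_iff (R : M) : SOn R ->
  critical_SO (Wt mu muc F) R <-> critical_point_eq mu muc (F *m R^T).
Proof.
move=> SO_R; have [RtR _] := SO_R; have RRt := mulmx1C RtR.
rewrite -stress_sym_iff -skew_orthogonal_sym; split=> [[_ crit] B Bskew | sym].
- have tan : tangentSO R (B *m R) by rewrite tangentSO_skew // -mulmxA RRt mulmx1.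
  have := (deriv0_Wt_line R (B *m R)).1 (crit _ tan).
  by rewrite first_variation_skew // => /eqP; rewrite oppr_eq0 => /eqP.
- split=> // H tan; apply/deriv0_Wt_line.
  have -> : H = (H *m R^T) *m R by rewrite -mulmxA RtR mulmx1.
  by rewrite first_variation_skew // ?sym ?oppr0 // -tangentSO_skew.
Qed.

End Energy.

Lemma critical_point_eq_commutator (mu muc : K) (X : M) :
  (X - X^T) *m ((mu - muc) *: (X + X^T) - (2 * mu) *: 1%:M)
    = (mu - muc) *: commutator X X^T <-> critical_point_eq mu muc X.
Proof.
have expand : (X - X^T) *m ((mu - muc) *: (X + X^T) - (2 * mu) *: 1%:M)
              - (mu - muc) *: commutator X X^T
            = (mu - muc) *: (X *m X - X^T *m X^T) - (2 * mu) *: (X - X^T).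
  rewrite /commutator mulmxBr -!scalemxAr mulmxDr !mulmxBl !mulmx1.
  set P := X *m X; set Q := X *m X^T; set Qt := X^T *m X; set Pt := X^T *m X^T.
  set Xt := X^T; clearbody P Q Qt Pt Xt.
  by apply/matrixP => i j; rewrite !mxE; ring.
rewrite /critical_point_eq; split=> [eq | eq].
- by apply/eqP; rewrite -subr_eq0 -expand eq subrr.
- by apply/eqP; rewrite -subr_eq0 expand eq subrr.
Qed.

Lemma subst_rotation (F X : M) : F \in unitmx -> F *m (X^T *m (invmx F)^T)^T = X.
Proof. by move=> Fu; rewrite trmx_mul !trmxK mulmxA mulmxV // mul1mx. Qed.

Lemma SOn_subst (F X : M) : 0 < \det F -> 0 < \det X ->
  SOn (X^T *m (invmx F)^T) <-> X *m X^T = F *m F^T.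
Proof.
move=> F_pos X_pos; have Fu : F \in unitmx by rewrite unitmxE unitfE gt_eqF.
have X_eq := subst_rotation X Fu; set R := X^T *m (invmx F)^T in X_eq *.
split=> [[RtR _] | gram].
- by rewrite -X_eq [(F *m R^T)^T]trmx_mul trmxK mulmxA -(mulmxA F) RtR mulmx1.
have RtR : R^T *m R = 1%:M.
  rewrite /R trmx_mul !trmxK mulmxA -(mulmxA _ X) gram mulmxA mulVmx // mul1mx.
  by rewrite -trmx_mul mulVmx // trmx1.
split=> //; apply: orthogonal_det_pos => //.
by rewrite /R det_mulmx !det_tr det_inv mulr_gt0 // invr_gt0.
Qed.

Lemma rotation_subst (F R : M) : 0 < \det F -> SOn R ->
  0 < \det (F *m R^T) /\ R = (F *m R^T)^T *m (invmx F)^T.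
Proof.
move=> F_pos [_ detR]; have Fu : F \in unitmx by rewrite unitmxE unitfE gt_eqF.
split; first by rewrite det_mulmx det_tr detR mulr1.
by rewrite trmx_mul trmxK -mulmxA -trmx_mul mulVmx // trmx1 mulmx1.
Qed.

Lemma critical_subst_iff (mu muc : K) (F X : M) : 0 < \det F -> 0 < \det X ->
  critical_SO (Wt mu muc F) (X^T *m (invmx F)^T) <->
  critical_point_eq mu muc X /\ X *m X^T = F *m F^T.
Proof.
move=> F_pos X_pos; have Fu : F \in unitmx by rewrite unitmxE unitfE gt_eqF.
have X_eq := subst_rotation X Fu.
rewrite -SOn_subst //; split=> [crit | [eq SO_R]].
- have SO_R := crit.1; split=> //; rewrite -X_eq; exact/critical_SO_iff.
- by apply/critical_SO_iff => //; rewrite X_eq.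
Qed.

End FreeEnergyVariation.

Theorem mainTheorem1 (K : realFieldType) (n : nat) (F : 'M[K]_n) (mu muc : K) :
  (2 <= n)%N -> GLplus F -> 0 < mu -> 0 <= muc ->
  (* (i) *)
  (forall R : 'M[K]_n, SOn R ->
     (critical_SO (Wt mu muc F) R <->
      (mu - muc) *: (F *m R^T *m F *m R^T - R *m F^T *m R *m F^T)
        = (2 * mu) *: (F *m R^T - R *m F^T)))
  /\
  (* (ii) *)
  (forall X : 'M[K]_n, 0 < \det X ->
     let R := X^T *m (invmx F)^T in
     (critical_SO (Wt mu muc F) R <->
      ((mu - muc) *: (X *m X - X^T *m X^T) = (2 * mu) *: (X - X^T)
       /\ X *m X^T = F *m F^T)))
  /\
  (* (iii) *)
  (forall X : 'M[K]_n, 0 < \det X ->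
     let R := X^T *m (invmx F)^T in
     (critical_SO (Wt mu muc F) R <->
      ((X - X^T) *m ((mu - muc) *: (X + X^T) - (2 * mu) *: 1%:M)
         = (mu - muc) *: commutator X X^T
       /\ X *m X^T = F *m F^T)))
  /\
  (* every rotation arises this way, with X = F R^T *)
  (forall R : 'M[K]_n, SOn R ->
     0 < \det (F *m R^T) /\ R = (F *m R^T)^T *m (invmx F)^T).
Proof.
move=> _ F_pos _ _; split; last split; last split.
- move=> R SO_R; rewrite critical_SO_iff //.
  by rewrite /critical_point_eq trmx_mul trmxK !mulmxA.
- by move=> X X_pos; apply: critical_subst_iff.
- move=> X X_pos R; apply: iff_trans (critical_subst_iff mu muc F_pos X_pos) _.
  by split=> -[eq gram]; split=> //; apply/critical_point_eq_commutator.
- by move=> R; apply: rotation_subst.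
Qed.
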